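(* An orientation-preserving non-Carleman shift $\alpha:\mathbb{R}_+\to\mathbb{R}_+$ belongs to $SOS(\mathbb{R}_+)$ if and only if $\alpha(t)=te^{\omega(t)}$ for $t\in\mathbb{R}_+$, for some real-valued function $\omega\in SO(\mathbb{R}_+)\cap C^1(\mathbb{R}_+)$ such that the function $t\mapsto t\omega'(t)$ also belongs to $SO(\mathbb{R}_+)$ and $\inf_{t\in\mathbb{R}_+}(1+t\omega'(t))>0$.
   Context: $\mathbb{R}_+=(0,\infty)$. $C_b(\mathbb{R}_+)$: bounded continuous complex functions on $\mathbb{R}_+$. $SO(\mathbb{R}_+)$ is the set of $f\in C_b(\mathbb{R}_+)$ with $\lim_{r\to s}\sup\{|f(t)-f(\tau)|:t,\tau\in[\lambda r,r]\}=0$ for $s\in\{0,\infty\}$ and each (equivalently some) $\lambda\in(0,1)$. An orientation-preserving non-Carleman shift is an orientation-preserving diffeomorphism $\alpha$ of $\mathbb{R}_+$ onto itself with no fixed points in $\mathbb{R}_+$ (only fixed points $0$ and $\infty$). $SOS(\mathbb{R}_+)$ is the set of such shifts with $\log\alpha'\in C_b(\mathbb{R}_+)$ and $\alpha'\in SO(\mathbb{R}_+)$. *)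

From Stdlib Require Import Reals.
From Coquelicot Require Import Coquelicot.
Open Scope R_scope.

(* Functions on R_+ = (0,oo) are represented as total functions R -> R;
   only their values on (0,oo) matter. *)

Definition C1_Rplus (f : R -> R) : Prop :=
  forall t, 0 < t -> ex_derive f t /\ continuous (Derive f) t.

Definition Cb_Rplus (f : R -> R) : Prop :=
  (forall t, 0 < t -> continuous f t) /\
  (exists C, forall t, 0 < t -> Rabs (f t) <= C).

(* SO(R_+): lim_{r -> s} sup{|f t - f tau| : t,tau in [lam r, r]} = 0 for
   s in {0, oo} and each lam in (0,1); "sup <= eps eventually" written out. *)
Definition SO_Rplus (f : R -> R) : Prop :=
  Cb_Rplus f /\
  (forall lam, 0 < lam < 1 -> forall eps, 0 < eps ->
     exists delta, 0 < delta /\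
       forall r, 0 < r < delta -> forall t tau,
         lam * r <= t <= r -> lam * r <= tau <= r -> Rabs (f t - f tau) <= eps) /\
  (forall lam, 0 < lam < 1 -> forall eps, 0 < eps ->
     exists M, 0 < M /\
       forall r, M < r -> forall t tau,
         lam * r <= t <= r -> lam * r <= tau <= r -> Rabs (f t - f tau) <= eps).

Definition diffeo_Rplus (alpha : R -> R) : Prop :=
  (forall t, 0 < t -> 0 < alpha t) /\ C1_Rplus alpha /\
  exists beta : R -> R,
    (forall t, 0 < t -> 0 < beta t /\ beta (alpha t) = t /\ alpha (beta t) = t) /\
    C1_Rplus beta.

Definition op_nonCarleman_shift (alpha : R -> R) : Prop :=
  diffeo_Rplus alpha /\
  (forall t u, 0 < t -> 0 < u -> t < u -> alpha t < alpha u) /\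
  (forall t, 0 < t -> alpha t <> t).

Definition SOS_Rplus (alpha : R -> R) : Prop :=
  op_nonCarleman_shift alpha /\
  Cb_Rplus (fun t => ln (Derive alpha t)) /\
  SO_Rplus (Derive alpha).

From Stdlib Require Import Reals Lra.
From Coquelicot Require Import Coquelicot.
Open Scope R_scope.

(* Write alpha t = t * exp (omega t), i.e. omega = ln alpha - ln.  Then
   alpha' = exp omega * (1 + t omega'), and 1 + t omega' is the elasticity
   t alpha' / alpha.  The SO conditions only involve oscillations over windows
   [lam r, r] as r tends to 0 or to +oo, so every estimate is made along an
   abstract filter on r with that window property.

   If alpha' is slowly oscillating and bounded between m > 0 and M, then
   alpha t is comparable to t, and the mean value theorem on [eps t, t] bounds
   |alpha t - t alpha' t| by eps M t plus t times the oscillation of alpha' on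
   that window.  Hence the elasticity tends to 1 at both ends: t omega' tends
   to 0, which makes both t omega' and omega slowly oscillating.  Conversely,
   alpha' = exp omega * (1 + t omega') is a product of bounded slowly
   oscillating functions, and 1 + t omega' >= c keeps ln alpha' bounded. *)

Lemma exp_le_compat x y : x <= y -> exp x <= exp y.
Proof.
  intros [Hlt| ->]; [now left; apply exp_increasing | apply Rle_refl].
Qed.

Lemma locally_pos t : 0 < t -> locally t (fun s => 0 < s).
Proof.
  intros Ht. exists (mkposreal t Ht). intros s Hs.
  change (Rabs (s - t) < t) in Hs. apply Rabs_def2 in Hs. lra.
Qed.

Lemma MVT_Derive f a b : a < b -> (forall x, a <= x <= b -> ex_derive f x) ->
  exists c, a <= c <= b /\ f b - f a = Derive f c * (b - a).
Proof.
  intros Hab Hd.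
  destruct (MVT_gen f a b (Derive f)) as [c [Hc Heq]];
    rewrite ?Rmin_left, ?Rmax_right in * by lra.
  - intros x Hx. apply Derive_correct, Hd. lra.
  - intros x Hx. apply continuity_pt_filterlim.
    apply (ex_derive_continuous (K := R_AbsRing) (V := R_NormedModule)), Hd. lra.
  - eauto.
Qed.

Lemma Rabs_sub_le_Derive f a b K :
  (forall x, a <= x <= b -> ex_derive f x) ->
  (forall x, a <= x <= b -> Rabs (Derive f x) <= K) ->
  forall t tau, a <= t <= b -> a <= tau <= b ->
  Rabs (f t - f tau) <= K * Rabs (t - tau).
Proof.
  intros Hd HK.
  assert (Hlt : forall t tau, a <= t <= b -> a <= tau <= b -> tau < t ->
            Rabs (f t - f tau) <= K * Rabs (t - tau)).
  { intros t tau Ht Htau Hlt.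
    destruct (MVT_Derive f tau t Hlt) as [c [Hc ->]]; [intros; apply Hd; lra|].
    rewrite Rabs_mult. apply Rmult_le_compat_r; [apply Rabs_pos | apply HK; lra]. }
  intros t tau Ht Htau.
  destruct (Rtotal_order t tau) as [H|[->|H]]; auto.
  - rewrite Rabs_minus_sym, (Rabs_minus_sym t). auto.
  - rewrite !Rminus_diag, Rabs_R0, Rmult_0_r. apply Rle_refl.
Qed.

Lemma Rabs_exp_sub_le a b C : a <= C -> b <= C ->
  Rabs (exp a - exp b) <= exp C * Rabs (a - b).
Proof.
  intros Ha Hb.
  apply (Rabs_sub_le_Derive exp (Rmin a b) C);
    try split; auto using Rmin_l, Rmin_r.
  - intros x _. auto_derive. easy.
  - intros x Hx.
    replace (Derive exp x) with (exp x)
      by (symmetry; apply is_derive_unique, is_derive_Reals, derivable_pt_lim_exp).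
    rewrite Rabs_pos_eq by (left; apply exp_pos). apply exp_le_compat. lra.
Qed.

Lemma filterlim_locally_Rabs_le {F} {FF : Filter F} (g : R -> R) l :
  filterlim g F (locally l) <->
  forall eps, 0 < eps -> F (fun t => Rabs (g t - l) <= eps).
Proof.
  rewrite filterlim_locally. split.
  - intros H eps Heps.
    exact (filter_imp _ _ (fun t Ht => Rlt_le _ _ Ht) (H (mkposreal eps Heps))).
  - intros H eps. pose proof (cond_pos eps) as Heps.
    refine (filter_imp _ _ _ (H (eps / 2) _)); [|lra].
    intros t Ht. change (Rabs (g t - l) < eps). lra.
Qed.

Lemma at_right_0_iff P :
  at_right 0 P <-> exists delta, 0 < delta /\ forall r, 0 < r < delta -> P r.
Proof.
  split.
  - intros [d Hd]. exists d. split; [apply cond_pos|]. intros r Hr. apply Hd; [|lra].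
    change (Rabs (r - 0) < d). rewrite Rminus_0_r, Rabs_pos_eq; lra.
  - intros [d [Hd HP]]. exists (mkposreal d Hd). intros r Hr Hpos. apply HP.
    change (Rabs (r - 0) < d) in Hr. rewrite Rminus_0_r, Rabs_pos_eq in Hr; lra.
Qed.

Lemma p_infty_iff P :
  Rbar_locally p_infty P <-> exists M, 0 < M /\ forall r, M < r -> P r.
Proof.
  split.
  - intros [M HM]. exists (Rmax 1 M). split; [pose proof (Rmax_l 1 M); lra|].
    intros r Hr. apply HM. pose proof (Rmax_r 1 M). lra.
  - intros [M [_ HM]]. now exists M.
Qed.

Definition window_osc (f : R -> R) (lam eps r : R) : Prop :=
  forall t tau, lam * r <= t <= r -> lam * r <= tau <= r -> Rabs (f t - f tau) <= eps.

Definition osc_vanishes (F : (R -> Prop) -> Prop) (f : R -> R) : Prop :=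
  forall lam, 0 < lam < 1 -> forall eps, 0 < eps -> F (window_osc f lam eps).

Definition window_filter (F : (R -> Prop) -> Prop) : Prop :=
  forall lam, 0 < lam < 1 -> forall P, F P ->
  F (fun r => 0 < r /\ forall t, lam * r <= t <= r -> P t).

Lemma window_filter_at_right_0 : window_filter (at_right 0).
Proof.
  intros lam Hlam P HP. apply at_right_0_iff in HP as [d [Hd HP]].
  apply at_right_0_iff. exists d. split; [exact Hd|].
  intros r Hr. split; [lra|]. intros t Ht. apply HP. nra.
Qed.

Lemma window_filter_p_infty : window_filter (Rbar_locally p_infty).
Proof.
  intros lam Hlam P HP. apply p_infty_iff in HP as [M [HM HP]].
  apply p_infty_iff. exists (M / lam). split; [apply Rdiv_lt_0_compat; lra|].
  intros r Hr. assert (M < lam * r).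
  { apply (Rmult_lt_compat_l lam) in Hr; [|lra]. field_simplify in Hr; lra. }
  split; [nra|]. intros t Ht. apply HP. lra.
Qed.

Lemma SO_Rplus_iff f : SO_Rplus f <->
  Cb_Rplus f /\ osc_vanishes (at_right 0) f /\ osc_vanishes (Rbar_locally p_infty) f.
Proof.
  split; intros [Hb [H0 Hinf]]; (split; [exact Hb|]);
    split; intros lam Hlam eps Heps.
  - apply at_right_0_iff, H0; auto.
  - apply p_infty_iff, Hinf; auto.
  - apply at_right_0_iff, H0; auto.
  - apply p_infty_iff, Hinf; auto.
Qed.

Section WindowFilter.

Context {F : (R -> Prop) -> Prop} {FF : Filter F} (HF : window_filter F).

Lemma window_filter_pos : F (fun r => 0 < r).
Proof.
  refine (filter_imp _ _ _ (HF (1 / 2) _ _ filter_true)); [|lra].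
  intros r [Hr _]. exact Hr.
Qed.

Lemma osc_vanishes_le_compat2 (h f g : R -> R) K : 0 <= K ->
  (forall t tau, 0 < t -> 0 < tau ->
     Rabs (h t - h tau) <= K * (Rabs (f t - f tau) + Rabs (g t - g tau))) ->
  osc_vanishes F f -> osc_vanishes F g -> osc_vanishes F h.
Proof.
  intros HK Hh Hf Hg lam Hlam eps Heps.
  set (e := eps / (2 * K + 1)).
  assert (He : 0 < e) by (apply Rdiv_lt_0_compat; lra).
  assert (HKe : K * (e + e) = eps - e) by (unfold e; field; lra).
  refine (filter_imp _ _ _ (filter_and _ _ window_filter_pos
            (filter_and _ _ (Hf lam Hlam e He) (Hg lam Hlam e He)))).
  intros r [Hr [Hfr Hgr]] t tau Ht Htau.
  eapply Rle_trans; [apply Hh; nra|].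
  apply (Rle_trans _ (K * (e + e))); [|lra].
  apply Rmult_le_compat_l; [exact HK|].
  apply Rplus_le_compat; [apply Hfr | apply Hgr]; auto.
Qed.

Lemma osc_vanishes_le_compat (h f : R -> R) K : 0 <= K ->
  (forall t tau, 0 < t -> 0 < tau -> Rabs (h t - h tau) <= K * Rabs (f t - f tau)) ->
  osc_vanishes F f -> osc_vanishes F h.
Proof.
  intros HK Hh Hf. apply (osc_vanishes_le_compat2 h f f K); auto.
  intros t tau Ht Htau. eapply Rle_trans; [apply Hh; auto|].
  apply Rmult_le_compat_l; [exact HK|]. pose proof (Rabs_pos (f t - f tau)). lra.
Qed.

Lemma osc_vanishes_mult (h f g : R -> R) B :
  (forall t, 0 < t -> h t = f t * g t) ->
  (forall t, 0 < t -> Rabs (f t) <= B) -> (forall t, 0 < t -> Rabs (g t) <= B) ->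
  osc_vanishes F f -> osc_vanishes F g -> osc_vanishes F h.
Proof.
  intros Hh Hf Hg. apply osc_vanishes_le_compat2 with B.
  { eapply Rle_trans; [apply Rabs_pos | apply (Hf 1); lra]. }
  intros t tau Ht Htau. rewrite !Hh by auto.
  replace (f t * g t - f tau * g tau)
    with (g t * (f t - f tau) + f tau * (g t - g tau)) by ring.
  eapply Rle_trans; [apply Rabs_triang|]. rewrite !Rabs_mult, Rmult_plus_distr_l.
  apply Rplus_le_compat; apply Rmult_le_compat_r; auto using Rabs_pos.
Qed.

Lemma osc_vanishes_of_lim0 (g : R -> R) :
  filterlim g F (locally 0) -> osc_vanishes F g.
Proof.
  rewrite filterlim_locally_Rabs_le. intros Hg lam Hlam eps Heps.
  refine (filter_imp _ _ _ (HF lam Hlam _ (Hg (eps / 2) _))); [|lra].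
  intros r [_ Hw] t tau Ht Htau.
  pose proof (Hw t Ht) as Hgt. pose proof (Hw tau Htau) as Hgtau.
  rewrite Rminus_0_r in Hgt, Hgtau.
  unfold Rminus. eapply Rle_trans; [apply Rabs_triang|]. rewrite Rabs_Ropp. lra.
Qed.

Lemma osc_vanishes_of_scaled_Derive (f : R -> R) :
  (forall x, 0 < x -> ex_derive f x) ->
  filterlim (fun t => t * Derive f t) F (locally 0) -> osc_vanishes F f.
Proof.
  rewrite filterlim_locally_Rabs_le. intros Hd Hg lam Hlam eps Heps.
  refine (filter_imp _ _ _ (HF lam Hlam _ (Hg (eps * lam) _))); [|nra].
  intros r [Hr Hw] t tau Ht Htau.
  assert (Hlr : 0 < lam * r) by nra.
  apply (Rle_trans _ (eps / r * Rabs (t - tau))).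
  - apply (Rabs_sub_le_Derive f (lam * r) r); auto.
    + intros x Hx. apply Hd. lra.
    + intros x Hx. specialize (Hw x Hx).
      rewrite Rminus_0_r, Rabs_mult, (Rabs_pos_eq x) in Hw by lra.
      apply (Rmult_le_reg_l r); [exact Hr|].
      replace (r * (eps / r)) with eps by (field; lra).
      pose proof (Rabs_pos (Derive f x)). nra.
  - replace eps with (eps / r * r) at 2 by (field; lra).
    apply Rmult_le_compat_l; [apply Rdiv_le_0_compat; lra|].
    apply Rabs_le. lra.
Qed.

End WindowFilter.

Lemma Derive_nonneg_of_increasing (f : R -> R) (t : R) : 0 < t ->
  (forall x, 0 < x -> ex_derive f x) -> continuous (Derive f) t ->
  (forall x y, 0 < x -> 0 < y -> x < y -> f x < f y) -> 0 <= Derive f t.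
Proof.
  intros Ht Hd Hc Hinc. apply Rnot_lt_le. intros Hneg.
  set (e := mkposreal _ (Ropp_0_gt_lt_contravar _ Hneg)).
  assert (Hloc : locally t (fun x => Derive f x < 0)).
  { apply (filter_imp (fun x => ball (Derive f t) e (Derive f x))).
    - intros x Hx. change (Rabs (Derive f x - Derive f t) < - Derive f t) in Hx.
      apply Rabs_def2 in Hx. lra.
    - apply Hc, locally_ball. }
  destruct Hloc as [d Hloc]. pose proof (cond_pos d) as Hdpos.
  destruct (MVT_Derive f t (t + d / 2)) as [c [Hc' Heq]]; [lra | intros; apply Hd; lra |].
  assert (Hfc : Derive f c < 0).
  { apply Hloc. change (Rabs (c - t) < d). apply Rabs_def1; lra. }
  pose proof (Hinc t (t + d / 2) Ht ltac:(lra) ltac:(lra)). nra.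
Qed.

Lemma Derive_mul_Derive_inverse (f g : R -> R) (t : R) :
  ex_derive f t -> ex_derive g (f t) -> locally t (fun s => g (f s) = s) ->
  Derive f t * Derive g (f t) = 1.
Proof.
  intros Hf Hg Hgf. rewrite <- (Derive_comp g f t) by auto.
  rewrite <- (Derive_id t). apply Derive_ext_loc, Hgf.
Qed.

Lemma shift_Derive_pos alpha : op_nonCarleman_shift alpha ->
  forall t, 0 < t -> 0 < Derive alpha t.
Proof.
  intros [[Hpos [Ha [beta [Hbeta Hb]]]] [Hinc _]] t Ht.
  assert (Hinv : Derive alpha t * Derive beta (alpha t) = 1).
  { apply Derive_mul_Derive_inverse; [apply Ha, Ht | apply Hb, Hpos, Ht |].
    apply (filter_imp (fun s => 0 < s)); [apply Hbeta | apply locally_pos, Ht]. }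
  destruct (Derive_nonneg_of_increasing alpha t Ht) as [Hlt | H0]; auto.
  - intros x Hx. apply Ha, Hx.
  - apply Ha, Ht.
  - rewrite <- H0, Rmult_0_l in Hinv. lra.
Qed.

Definition log_ratio (a : R -> R) (t : R) : R := ln (a t) - ln t.

Lemma exp_log_ratio a t : 0 < t -> 0 < a t -> t * exp (log_ratio a t) = a t.
Proof.
  intros Ht Ha. unfold log_ratio, Rminus.
  rewrite exp_plus, exp_Ropp, !exp_ln by assumption. field. lra.
Qed.

Section DerivativeBounds.

Variables (a : R -> R) (m M : R).
Hypothesis a_derivable : forall s, 0 < s -> ex_derive a s.
Hypothesis Derive_a_continuous : forall s, 0 < s -> continuous (Derive a) s.
Hypothesis Derive_a_bounds : forall s, 0 < s -> m <= Derive a s <= M.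
Hypothesis m_pos : 0 < m.
Hypothesis a_pos : forall s, 0 < s -> 0 < a s.
Hypothesis a_inf0 : forall e, 0 < e -> exists x, 0 < x /\ a x <= e.

Lemma increment_bounds x y : 0 < x <= y -> m * (y - x) <= a y - a x <= M * (y - x).
Proof.
  intros Hxy. destruct (Rle_lt_or_eq_dec x y (proj2 Hxy)) as [Hlt | <-].
  - destruct (MVT_Derive a x y Hlt) as [c [Hc ->]]; [intros; apply a_derivable; lra|].
    destruct (Derive_a_bounds c) as [Hl Hu]; [lra|].
    split; apply Rmult_le_compat_r; lra.
  - rewrite !Rminus_diag, !Rmult_0_r. lra.
Qed.

Lemma linear_bounds s : 0 < s -> m * s <= a s <= M * s.
Proof.
  intros Hs. pose proof (Derive_a_bounds s Hs) as HM. split.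
  - apply Rnot_lt_le. intros Hlt.
    set (d := (m * s - a s) / (2 * m)).
    assert (Hd : 0 < d < s) by (pose proof (a_pos s Hs); split; unfold d;
      [apply Rdiv_lt_0_compat | apply Rlt_div_l]; nra).
    pose proof (increment_bounds d s ltac:(lra)). pose proof (a_pos d (proj1 Hd)).
    assert (m * d = (m * s - a s) / 2) by (unfold d; field; lra). nra.
  - apply Rle_plus_epsilon. intros e He. destruct (a_inf0 e He) as [x [Hx Hax]].
    destruct (Rle_lt_dec x s) as [Hxs | Hsx].
    + pose proof (increment_bounds x s ltac:(lra)). nra.
    + pose proof (increment_bounds s x ltac:(lra)). nra.
Qed.

Lemma Rabs_sub_scaled_Derive_le t eps : 0 < t -> 0 < eps < 1 ->
  exists x, eps * t <= x <= t /\
  Rabs (a t - t * Derive a t) <= eps * M * t + t * Rabs (Derive a x - Derive a t).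
Proof.
  intros Ht Heps. assert (Het : 0 < eps * t) by nra.
  destruct (MVT_Derive a (eps * t) t) as [x [Hx Heq]]; [nra | intros; apply a_derivable; lra |].
  exists x. split; [exact Hx|].
  (* Both a (eps t) and eps t a'(x) lie in [0, eps M t]. *)
  replace (a t - t * Derive a t)
    with ((a (eps * t) - eps * t * Derive a x) + t * (Derive a x - Derive a t)) by nra.
  eapply Rle_trans; [apply Rabs_triang|].
  rewrite Rabs_mult, (Rabs_pos_eq t) by lra.
  apply Rplus_le_compat_r, Rabs_le.
  pose proof (linear_bounds (eps * t) Het). pose proof (Derive_a_bounds x ltac:(lra)). nra.
Qed.

Lemma elasticity_bounds t : 0 < t -> m / M <= t * Derive a t / a t <= M / m.
Proof.
  intros Ht. pose proof (linear_bounds t Ht). pose proof (Derive_a_bounds t Ht).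
  pose proof (a_pos t Ht). assert (0 < M) by lra. split.
  - apply (Rmult_le_reg_r (M * a t)); [nra|].
    replace (m / M * (M * a t)) with (m * a t) by (field; lra).
    replace (t * Derive a t / a t * (M * a t)) with (M * (t * Derive a t)) by (field; lra).
    nra.
  - apply (Rmult_le_reg_r (m * a t)); [nra|].
    replace (M / m * (m * a t)) with (M * a t) by (field; lra).
    replace (t * Derive a t / a t * (m * a t)) with (m * (t * Derive a t)) by (field; lra).
    nra.
Qed.

Lemma filterlim_elasticity {F} {FF : Filter F} : window_filter F ->
  osc_vanishes F (Derive a) -> filterlim (fun t => t * Derive a t / a t) F (locally 1).
Proof.
  intros HF Hosc. apply filterlim_locally_Rabs_le. intros th Hth.
  assert (HM : 0 < M) by (pose proof (Derive_a_bounds 1 Rlt_0_1); lra).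
  set (eps := th * m / (2 * M + th * m)).
  assert (Heps : 0 < eps < 1).
  { unfold eps. split; [apply Rdiv_lt_0_compat | apply Rlt_div_l]; nra. }
  assert (HepsM : eps * M <= th * m / 2).
  { assert (eps * (2 * M + th * m) = th * m) by (unfold eps; field; nra). nra. }
  refine (filter_imp _ _ _ (filter_and _ _ (window_filter_pos HF)
            (Hosc eps Heps (th * m / 2) _))); [|nra].
  intros t [Ht Hw].
  destruct (Rabs_sub_scaled_Derive_le t eps Ht Heps) as [x [Hx Hkey]].
  assert (Hosc_t : Rabs (Derive a x - Derive a t) <= th * m / 2) by (apply Hw; nra).
  pose proof (a_pos t Ht) as Hat. pose proof (linear_bounds t Ht).
  apply (Rmult_le_reg_r (a t) _ _ Hat).
  replace (Rabs (t * Derive a t / a t - 1) * a t)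
    with (Rabs ((t * Derive a t / a t - 1) * a t))
    by (rewrite Rabs_mult, (Rabs_pos_eq (a t)); lra).
  replace ((t * Derive a t / a t - 1) * a t) with (t * Derive a t - a t) by (field; lra).
  rewrite Rabs_minus_sym. nra.
Qed.

Lemma is_derive_log_ratio t : 0 < t ->
  is_derive (log_ratio a) t (Derive a t / a t - / t).
Proof.
  intros Ht. pose proof (a_pos t Ht). unfold log_ratio. auto_derive.
  - repeat split; auto.
  - change (Derive (fun x => a x) t) with (Derive a t).
    match goal with |- ?l = ?r => change (@eq R l r) end. field. lra.
Qed.

Lemma scaled_Derive_log_ratio t : 0 < t ->
  t * Derive (log_ratio a) t = t * Derive a t / a t - 1.
Proof.
  intros Ht. rewrite (is_derive_unique _ _ _ (is_derive_log_ratio t Ht)).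
  pose proof (a_pos t Ht). field. lra.
Qed.

Lemma log_ratio_C1 : C1_Rplus (log_ratio a).
Proof.
  intros t Ht. split; [eexists; apply is_derive_log_ratio, Ht|].
  apply (continuous_ext_loc _ (fun s => Derive a s * / a s + - / s)).
  { apply (filter_imp (fun s => 0 < s)); [|apply locally_pos, Ht].
    intros s Hs. apply eq_sym, is_derive_unique, is_derive_log_ratio, Hs. }
  pose proof (a_pos t Ht).
  apply (continuous_plus (V := R_NormedModule)).
  - apply (continuous_mult (K := R_AbsRing)); [apply Derive_a_continuous, Ht|].
    apply continuous_Rinv_comp; [|lra].
    apply (ex_derive_continuous (K := R_AbsRing) (V := R_NormedModule)), a_derivable, Ht.
  - apply (continuous_opp (V := R_NormedModule)), continuous_Rinv. lra.
Qed.

Lemma log_ratio_bounds t : 0 < t -> ln m <= log_ratio a t <= ln M.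
Proof.
  intros Ht. pose proof (linear_bounds t Ht). unfold log_ratio.
  assert (0 < M) by (pose proof (Derive_a_bounds t Ht); lra).
  pose proof (ln_le (m * t) (a t) ltac:(nra) ltac:(lra)).
  pose proof (ln_le (a t) (M * t) (a_pos t Ht) ltac:(lra)).
  rewrite ln_mult in * by lra. lra.
Qed.

Lemma filterlim_scaled_Derive_log_ratio {F} {FF : Filter F} : window_filter F ->
  osc_vanishes F (Derive a) ->
  filterlim (fun t => t * Derive (log_ratio a) t) F (locally 0).
Proof.
  intros HF Hosc. pose proof (filterlim_elasticity HF Hosc) as Hel.
  rewrite filterlim_locally_Rabs_le in *. intros eps Heps.
  refine (filter_imp _ _ _ (filter_and _ _ (window_filter_pos HF) (Hel eps Heps))).
  intros t [Ht Hle]. rewrite scaled_Derive_log_ratio, Rminus_0_r by exact Ht. exact Hle.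
Qed.

Lemma SO_Rplus_log_ratio : SO_Rplus (Derive a) -> SO_Rplus (log_ratio a).
Proof.
  intros HSO. apply SO_Rplus_iff in HSO as [_ [Hosc0 Hoscinf]].
  assert (Hder : forall t, 0 < t -> ex_derive (log_ratio a) t)
    by (intros t Ht; apply log_ratio_C1, Ht).
  apply SO_Rplus_iff. split; [split|split].
  - intros t Ht.
    apply (ex_derive_continuous (K := R_AbsRing) (V := R_NormedModule)), Hder, Ht.
  - exists (Rmax (ln M) (- ln m)). intros t Ht.
    apply Rabs_le_between_Rmax, log_ratio_bounds, Ht.
  - apply (osc_vanishes_of_scaled_Derive window_filter_at_right_0 _ Hder).
    apply (filterlim_scaled_Derive_log_ratio window_filter_at_right_0 Hosc0).
  - apply (osc_vanishes_of_scaled_Derive window_filter_p_infty _ Hder).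
    apply (filterlim_scaled_Derive_log_ratio window_filter_p_infty Hoscinf).
Qed.

Lemma SO_Rplus_scaled_Derive_log_ratio : SO_Rplus (Derive a) ->
  SO_Rplus (fun t => t * Derive (log_ratio a) t).
Proof.
  intros HSO. apply SO_Rplus_iff in HSO as [_ [Hosc0 Hoscinf]].
  assert (HM : 0 < M) by (pose proof (Derive_a_bounds 1 Rlt_0_1); lra).
  apply SO_Rplus_iff. split; [split|split].
  - intros t Ht. apply (continuous_mult (K := R_AbsRing)); [apply continuous_id|].
    apply log_ratio_C1, Ht.
  - exists (M / m + 1). intros t Ht. rewrite scaled_Derive_log_ratio by exact Ht.
    pose proof (elasticity_bounds t Ht).
    pose proof (Rdiv_lt_0_compat _ _ HM m_pos). pose proof (Rdiv_lt_0_compat _ _ m_pos HM).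
    apply Rabs_le. lra.
  - apply osc_vanishes_of_lim0; [apply window_filter_at_right_0|].
    apply (filterlim_scaled_Derive_log_ratio window_filter_at_right_0 Hosc0).
  - apply osc_vanishes_of_lim0; [apply window_filter_p_infty|].
    apply (filterlim_scaled_Derive_log_ratio window_filter_p_infty Hoscinf).
Qed.

End DerivativeBounds.

Section ScaledExp.

Variables (alpha omega : R -> R) (C c K : R).
Hypothesis omega_derivable : forall t, 0 < t -> ex_derive omega t.
Hypothesis alpha_eq : forall t, 0 < t -> alpha t = t * exp (omega t).
Hypothesis omega_bounds : forall t, 0 < t -> Rabs (omega t) <= C.
Hypothesis c_pos : 0 < c.
Hypothesis factor_bounds : forall t, 0 < t -> c <= 1 + t * Derive omega t <= K.

Lemma Derive_scaled_exp t : 0 < t ->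
  Derive alpha t = exp (omega t) * (1 + t * Derive omega t).
Proof.
  intros Ht.
  rewrite (Derive_ext_loc alpha (fun s => s * exp (omega s))).
  - apply is_derive_unique. auto_derive; [apply omega_derivable, Ht|].
    change (Derive (fun x => omega x) t) with (Derive omega t).
    match goal with |- ?l = ?r => change (@eq R l r) end. ring.
  - apply (filter_imp (fun s => 0 < s)); [apply alpha_eq | apply locally_pos, Ht].
Qed.

Lemma Derive_scaled_exp_pos t : 0 < t -> 0 < Derive alpha t.
Proof.
  intros Ht. rewrite Derive_scaled_exp by exact Ht. pose proof (factor_bounds t Ht).
  apply Rmult_lt_0_compat; [apply exp_pos | lra].
Qed.

Lemma Rabs_ln_Derive_scaled_exp_le t : 0 < t ->
  Rabs (ln (Derive alpha t)) <= C + Rmax (ln K) (- ln c).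
Proof.
  intros Ht. pose proof (factor_bounds t Ht) as [Hc HK].
  rewrite Derive_scaled_exp, ln_mult, ln_exp by (try apply exp_pos; lra).
  eapply Rle_trans; [apply Rabs_triang|].
  apply Rplus_le_compat; [apply omega_bounds, Ht|].
  apply Rabs_le_between_Rmax. split; apply ln_le; lra.
Qed.

Lemma Rabs_Derive_scaled_exp_le t : 0 < t -> Rabs (Derive alpha t) <= exp C * K.
Proof.
  intros Ht. pose proof (factor_bounds t Ht).
  pose proof (proj1 (Rabs_le_between _ _) (omega_bounds t Ht)).
  rewrite Derive_scaled_exp, Rabs_mult, !Rabs_pos_eq by (try left; try apply exp_pos; lra).
  apply Rmult_le_compat; [left; apply exp_pos | lra | apply exp_le_compat | ]; lra.
Qed.

Lemma osc_vanishes_Derive_scaled_exp {F} {FF : Filter F} : window_filter F ->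
  osc_vanishes F omega -> osc_vanishes F (fun t => t * Derive omega t) ->
  osc_vanishes F (Derive alpha).
Proof.
  intros HF Hw Hg.
  assert (Hwb : forall t, 0 < t -> - C <= omega t <= C)
    by (intros t Ht; apply Rabs_le_between, omega_bounds, Ht).
  apply (osc_vanishes_mult HF _ (fun t => exp (omega t)) (fun t => 1 + t * Derive omega t)
           (Rmax (exp C) K) Derive_scaled_exp).
  - intros t Ht. rewrite Rabs_pos_eq by (left; apply exp_pos).
    eapply Rle_trans; [apply exp_le_compat, (Hwb t Ht) | apply Rmax_l].
  - intros t Ht. pose proof (factor_bounds t Ht). rewrite Rabs_pos_eq by lra.
    eapply Rle_trans; [apply (factor_bounds t Ht) | apply Rmax_r].
  - apply (osc_vanishes_le_compat HF _ omega (exp C)); [left; apply exp_pos | | exact Hw].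
    intros t tau Ht Htau. apply Rabs_exp_sub_le; [apply (Hwb t Ht) | apply (Hwb tau Htau)].
  - apply (osc_vanishes_le_compat HF _ (fun t => t * Derive omega t) 1); [lra | | exact Hg].
    intros t tau _ _. rewrite Rmult_1_l. apply Req_le. f_equal. ring.
Qed.

End ScaledExp.

Definition SOS_exponent (alpha omega : R -> R) : Prop :=
  SO_Rplus omega /\ C1_Rplus omega /\
  SO_Rplus (fun t => t * Derive omega t) /\
  (exists c, 0 < c /\ forall t, 0 < t -> c <= 1 + t * Derive omega t) /\
  (forall t, 0 < t -> alpha t = t * exp (omega t)).

Lemma SOS_exponent_log_ratio alpha : op_nonCarleman_shift alpha -> SOS_Rplus alpha ->
  SOS_exponent alpha (log_ratio alpha).
Proof.
  intros Halpha [_ [[_ [C HC]] HSO]].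
  pose proof (shift_Derive_pos alpha Halpha) as HDpos.
  destruct Halpha as [[Hpos [Hder [beta [Hbeta _]]]] _].
  assert (Hex : forall s, 0 < s -> ex_derive alpha s) by (intros s Hs; apply Hder, Hs).
  assert (HDcont : forall s, 0 < s -> continuous (Derive alpha) s)
    by (intros s Hs; apply Hder, Hs).
  assert (HDa : forall s, 0 < s -> exp (- C) <= Derive alpha s <= exp C).
  { intros s Hs. rewrite <- (exp_ln (Derive alpha s)) by auto.
    specialize (HC s Hs). apply Rabs_le_between in HC. split; apply exp_le_compat; lra. }
  assert (Hinf0 : forall e, 0 < e -> exists x, 0 < x /\ alpha x <= e).
  { intros e He. destruct (Hbeta e He) as [Hb [_ Hab]]. exists (beta e). rewrite Hab. lra. }
  pose proof (exp_pos (- C)) as Hm.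
  split; [|split; [|split; [|split]]].
  - apply (SO_Rplus_log_ratio alpha (exp (- C)) (exp C)); assumption.
  - apply log_ratio_C1; assumption.
  - apply (SO_Rplus_scaled_Derive_log_ratio alpha (exp (- C)) (exp C)); assumption.
  - exists (exp (- C) / exp C). split; [apply Rdiv_lt_0_compat; apply exp_pos|].
    intros t Ht. rewrite scaled_Derive_log_ratio by assumption.
    pose proof (elasticity_bounds alpha (exp (- C)) (exp C) Hex HDa Hm Hpos Hinf0 t Ht). lra.
  - intros t Ht. symmetry. apply exp_log_ratio; auto.
Qed.

Lemma SOS_Rplus_of_exponent alpha omega : op_nonCarleman_shift alpha ->
  SOS_exponent alpha omega -> SOS_Rplus alpha.
Proof.
  intros Halpha [Hw [Hw1 [Hg [[c [Hc Hcg]] Heq]]]].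
  apply SO_Rplus_iff in Hw as [[_ [C HC]] [Hw0 Hwinf]].
  apply SO_Rplus_iff in Hg as [[_ [K HK]] [Hg0 Hginf]].
  assert (Hder : forall t, 0 < t -> ex_derive omega t) by (intros t Ht; apply Hw1, Ht).
  assert (Hfactor : forall t, 0 < t -> c <= 1 + t * Derive omega t <= 1 + K).
  { intros t Ht. split; [apply Hcg, Ht|].
    pose proof (Rle_abs (t * Derive omega t)). specialize (HK t Ht). cbn beta in HK. lra. }
  assert (HDcont : forall t, 0 < t -> continuous (Derive alpha) t)
    by (intros t Ht; apply Halpha, Ht).
  split; [exact Halpha|]. split; [split|].
  - intros t Ht. apply (continuous_comp (Derive alpha) ln); [apply HDcont, Ht|].
    apply continuous_ln, (Derive_scaled_exp_pos alpha omega c (1 + K)); assumption.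
  - exists (C + Rmax (ln (1 + K)) (- ln c)). intros t Ht.
    apply (Rabs_ln_Derive_scaled_exp_le alpha omega C c (1 + K)); assumption.
  - apply SO_Rplus_iff. split; [split|split].
    + exact HDcont.
    + exists (exp C * (1 + K)). intros t Ht.
      apply (Rabs_Derive_scaled_exp_le alpha omega C c (1 + K)); assumption.
    + apply (osc_vanishes_Derive_scaled_exp alpha omega C c (1 + K)); try assumption;
        first [typeclasses eauto | apply window_filter_at_right_0].
    + apply (osc_vanishes_Derive_scaled_exp alpha omega C c (1 + K)); try assumption;
        first [typeclasses eauto | apply window_filter_p_infty].
Qed.
Theorem lemma2p2 (alpha : R -> R) (Halpha : op_nonCarleman_shift alpha) :
  SOS_Rplus alpha <->
  exists omega : R -> R,
    SO_Rplus omega /\ C1_Rplus omega /\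
    SO_Rplus (fun t => t * Derive omega t) /\
    (exists c, 0 < c /\ forall t, 0 < t -> c <= 1 + t * Derive omega t) /\
    (forall t, 0 < t -> alpha t = t * exp (omega t)).
Proof.
  split.
  - intros HSOS. exists (log_ratio alpha). apply SOS_exponent_log_ratio; assumption.
  - intros [omega Homega]. apply (SOS_Rplus_of_exponent alpha omega); assumption.
Qed.
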